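(* Let $\mathcal{L}$ be a logic, $\mathcal{Q}$ an involution lattice, and $f:\mathcal{L}\to\mathcal{Q}$ an observable. Then for all $A,B\in\mathcal{L}$: (a) $f$ is monotone: $A\le B\Rightarrow f(A)\le f(B)$; (b) if $\mathcal{L}$ is Boolean, then $f(A\vee B)=f(A)\vee f(B)$; (c) $f(A^\perp)\le f(A)^\perp$, and if $\mathcal{Q}$ is a logic then $f(A^\perp)=f(A)^\perp$; (d) if $\mathcal{L}$ is Boolean and $\mathcal{Q}$ is a logic, then $f$ is a logic homomorphism.
   Context: An involution lattice is a $\sigma$-complete bounded lattice (with $0,1$) carrying an order-reversing involution $A\mapsto A^\perp$ ($A^{\perp\perp}=A$, $A\le B\Rightarrow B^\perp\le A^\perp$), not necessarily a complement. A logic is an involution lattice in which $\perp$ is an orthocomplementation ($A\wedge A^\perp=0$, $A\vee A^\perp=1$) and which is orthomodular ($A\le B\Rightarrow B=A\vee(A^\perp\wedge B)$); it is Boolean if moreover distributive. $A,B$ are separated if $A\le B^\perp$; a subset is separated if any two distinct elements are separated. An observable $f:\mathcal{L}\to\mathcal{Q}$ is a map with (i) $f(0)=0$, $f(1)=1$; (ii) $f(\bigvee_{A\in\mathcal{L}_0}A)=\bigvee_{A\in\mathcal{L}_0}f(A)$ for every countable separated $\mathcal{L}_0\subset\mathcal{L}$; (iii) $A\le B^\perp\Rightarrow f(A)\le f(B)^\perp$. A logic homomorphism preserves $0,1$, $\perp$, and binary joins and meets. *)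

From HB Require Import structures.
From mathcomp Require Import all_boot all_order.
Set Implicit Arguments. Unset Strict Implicit. Unset Printing Implicit Defensive.
Import Order.TTheory.
Local Open Scope order_scope.

Section Defs.
Context {d : Order.disp_t} {T : tbLatticeType d}.

Definition is_lub (S : T -> Prop) (x : T) : Prop :=
  (forall y, S y -> y <= x) /\ (forall z, (forall y, S y -> y <= z) -> x <= z).

Definition countable_set (S : T -> Prop) : Prop :=
  exists g : nat -> T, forall x, S x -> exists n, g n = x.

Definition sigma_complete : Prop :=
  forall S : T -> Prop, countable_set S -> exists x, is_lub S x.

Definition involution_lattice (perp : T -> T) : Prop :=
  [/\ sigma_complete,
      (forall A, perp (perp A) = A) &
      (forall A B, A <= B -> perp B <= perp A)].

Definition is_logic (perp : T -> T) : Prop :=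
  [/\ involution_lattice perp,
      (forall A, A `&` perp A = \bot),
      (forall A, A `|` perp A = \top) &
      (forall A B, A <= B -> B = A `|` (perp A `&` B))].

Definition is_boolean_logic (perp : T -> T) : Prop :=
  is_logic perp /\
  (forall A B C : T, A `&` (B `|` C) = (A `&` B) `|` (A `&` C)).

Definition separated (perp : T -> T) (A B : T) : Prop := A <= perp B.

Definition separated_set (perp : T -> T) (S : T -> Prop) : Prop :=
  forall A B, S A -> S B -> A <> B -> separated perp A B.

End Defs.

Definition observable {dL dQ : Order.disp_t} {L : tbLatticeType dL} {Q : tbLatticeType dQ}
  (perpL : L -> L) (perpQ : Q -> Q) (f : L -> Q) : Prop :=
  [/\ f \bot = \bot /\ f \top = \top,
      (forall (S : L -> Prop) (a : L),
          countable_set S -> separated_set perpL S -> is_lub S a ->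
          is_lub (fun y => exists2 x, S x & f x = y) (f a)) &
      (forall A B, separated perpL A B -> separated perpQ (f A) (f B))].

Definition logic_hom {dL dQ : Order.disp_t} {L : tbLatticeType dL} {Q : tbLatticeType dQ}
  (perpL : L -> L) (perpQ : Q -> Q) (f : L -> Q) : Prop :=
  [/\ f \bot = \bot, f \top = \top,
      (forall A, f (perpL A) = perpQ (f A)),
      (forall A B, f (A `|` B) = f A `|` f B) &
      (forall A B, f (A `&` B) = f A `&` f B)].

(* An observable is additive on separated pairs, since {A, B} with A <= B^⊥ is
   a countable separated set with supremum A ∨ B.  Orthomodularity writes any
   B >= A as the separated join A ∨ (A^⊥ ∧ B), which gives monotonicity; in a
   Boolean logic A ∨ B = A ∨ (A^⊥ ∧ B) for all A, B, which gives additivity.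
   Separation of A and A^⊥ gives f(A^⊥) <= f(A)^⊥; when Q is orthomodular,
   f(A^⊥) <= f(A)^⊥ and f(A) ∨ f(A^⊥) = f(1) = 1 force equality, and De Morgan
   then transfers meets. *)
From HB Require Import structures.
From mathcomp Require Import all_boot all_order.
Import Order.TTheory.
Local Open Scope order_scope.

Section InvolutionLattice.
Context {d : Order.disp_t} {T : tbLatticeType d} (perp : T -> T).
Hypothesis perpK : involutive perp.
Hypothesis perp_anti : forall A B, A <= B -> perp B <= perp A.

Lemma le_perp_swap A B : A <= perp B -> B <= perp A.
Proof. by move=> /perp_anti; rewrite perpK. Qed.

Lemma le_perp_perp_meet A B : A <= perp (perp A `&` B).
Proof. by apply: le_perp_swap; rewrite leIl. Qed.

Lemma perpU A B : perp (A `|` B) = perp A `&` perp B.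
Proof.
apply/le_anti/andP; split.
  by rewrite lexI; apply/andP; split; apply: perp_anti; rewrite ?leUl ?leUr.
rewrite -[X in X <= _]perpK; apply: perp_anti; rewrite leUx.
by apply/andP; split; apply: le_perp_swap; rewrite ?leIl ?leIr.
Qed.

Lemma perp1 : perp \top = \bot.
Proof. by apply/le_anti; rewrite le0x -[X in _ <= X]perpK perp_anti ?lex1. Qed.

End InvolutionLattice.

Section Pair.
Context {d : Order.disp_t} {T : tbLatticeType d}.

Definition pair_set (A B : T) : T -> Prop := fun C => C = A \/ C = B.

Lemma countable_pair_set A B : countable_set (pair_set A B).
Proof.
exists (fun n => if n is 0 then A else B) => C [->|->]; first by exists 0.
by exists 1.
Qed.

Lemma is_lub_pair_set A B : is_lub (pair_set A B) (A `|` B).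
Proof.
split; first by move=> C [->|->]; rewrite ?leUl ?leUr.
by move=> C ub; rewrite leUx !ub /pair_set; auto.
Qed.

Lemma separated_pair_set {perp : T -> T} {A B : T} :
  involutive perp -> (forall A B, A <= B -> perp B <= perp A) ->
  separated perp A B -> separated_set perp (pair_set A B).
Proof.
move=> perpK perp_anti AB C D [->|->] [->|->] // _; rewrite /separated //.
exact: le_perp_swap.
Qed.

End Pair.

Lemma boolean_join_perp_meet {d : Order.disp_t} {T : tbLatticeType d}
    {perp : T -> T} (A B : T) :
  is_boolean_logic perp -> A `|` B = A `|` (perp A `&` B).
Proof.
move=> [[_ meet_perp _ orthomodular] distr].
by rewrite {1}(orthomodular _ _ (leUl A B)) distr [perp A `&` A]meetC meet_perp join0x.
Qed.

Section Observable.
Context {dL dQ : Order.disp_t} {L : tbLatticeType dL} {Q : tbLatticeType dQ}.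
Context {perpL : L -> L} {perpQ : Q -> Q} {f : L -> Q}.
Hypothesis perpLK : involutive perpL.
Hypothesis perpL_anti : forall A B, A <= B -> perpL B <= perpL A.
Hypothesis orthomodularL : forall A B, A <= B -> B = A `|` (perpL A `&` B).
Hypothesis f_sup : forall (S : L -> Prop) (a : L),
  countable_set S -> separated_set perpL S -> is_lub S a ->
  is_lub (fun y => exists2 x, S x & f x = y) (f a).
Hypothesis f_sep : forall A B, separated perpL A B -> separated perpQ (f A) (f B).

Lemma observable_join_separated A B :
  A <= perpL B -> f (A `|` B) = f A `|` f B.
Proof.
move=> AB.
have [f_ub f_least] := f_sup _ _ (countable_pair_set A B)
  (separated_pair_set perpLK perpL_anti AB) (is_lub_pair_set A B).
apply/le_anti/andP; split.
  by apply: f_least => _ [C [->|->] <-]; rewrite ?leUl ?leUr.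
by rewrite leUx !f_ub //; [exists B; [right|] | exists A; [left|]].
Qed.

Lemma observable_mono A B : A <= B -> f A <= f B.
Proof.
move=> AB; rewrite (orthomodularL _ _ AB).
by rewrite observable_join_separated ?le_perp_perp_meet ?leUl.
Qed.

Lemma observable_join (boolL : is_boolean_logic perpL) A B :
  f (A `|` B) = f A `|` f B.
Proof.
apply/le_anti/andP; split; last first.
  by rewrite leUx !observable_mono ?leUl ?leUr.
rewrite (boolean_join_perp_meet A B boolL).
rewrite observable_join_separated ?le_perp_perp_meet //.
by rewrite leUx leUl (le_trans _ (leUr _ _)) // observable_mono ?leIr.
Qed.

Lemma observable_perp_le A : f (perpL A) <= perpQ (f A).
Proof. exact: (f_sep (perpL A) A (lexx _)). Qed.

Hypothesis joinL_perp : forall A, A `|` perpL A = \top.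
Hypothesis f_top : f \top = \top.
Hypothesis perpQK : involutive perpQ.
Hypothesis perpQ_anti : forall A B, A <= B -> perpQ B <= perpQ A.
Hypothesis orthomodularQ : forall A B, A <= B -> B = A `|` (perpQ A `&` B).

Lemma observable_perp A : f (perpL A) = perpQ (f A).
Proof.
have f_cover : f A `|` f (perpL A) = \top.
  by rewrite -observable_join_separated ?perpLK // joinL_perp.
rewrite [RHS](orthomodularQ _ _ (observable_perp_le A)) -perpU //.
by rewrite [f (perpL A) `|` f A]joinC f_cover perp1 // joinx0.
Qed.

Lemma observable_meet (boolL : is_boolean_logic perpL) A B :
  f (A `&` B) = f A `&` f B.
Proof.
rewrite -[A]perpLK -[B]perpLK -perpU //.
by rewrite observable_perp observable_join // !observable_perp perpU // !perpQK.
Qed.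

End Observable.

Theorem lemma3p2 (dL : Order.disp_t) (L : tbLatticeType dL) (perpL : L -> L)
  (dQ : Order.disp_t) (Q : tbLatticeType dQ) (perpQ : Q -> Q) (f : L -> Q) :
  is_logic perpL -> involution_lattice perpQ -> observable perpL perpQ f ->
  (forall A B : L, A <= B -> f A <= f B) /\
  (is_boolean_logic perpL -> forall A B : L, f (A `|` B) = f A `|` f B) /\
  (forall A : L, f (perpL A) <= perpQ (f A)) /\
  (is_logic perpQ -> forall A : L, f (perpL A) = perpQ (f A)) /\
  (is_boolean_logic perpL -> is_logic perpQ -> logic_hom perpL perpQ f).
Proof.
(* The involution on Q matters only when Q is a logic, which supplies it again. *)
move=> [[_ perpLK perpL_anti] _ joinL_perp omL] _ [[f_bot f_top] f_sup f_sep].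
have mono := observable_mono perpLK perpL_anti omL f_sup.
have join := observable_join perpLK perpL_anti omL f_sup.
have perp_le := observable_perp_le f_sep.
have perp : is_logic perpQ -> forall A, f (perpL A) = perpQ (f A).
  move=> [[_ perpQK perpQ_anti] _ _ omQ].
  exact: observable_perp perpLK perpL_anti f_sup f_sep joinL_perp f_top
    perpQK perpQ_anti omQ.
do 4!split=> //.
move=> boolL logicQ; split=> //; [exact: perp | exact: join |].
have [[_ perpQK perpQ_anti] _ _ omQ] := logicQ.
exact: observable_meet perpLK perpL_anti omL f_sup f_sep joinL_perp f_top
  perpQK perpQ_anti omQ boolL.
Qed.
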